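(* Let $T$ be a tournament whose strong components are $D_1,\ldots,D_k$, for some positive integer $k$, and let $\mathcal{X}\in\{g,P_3^*\}$. Then $$\overrightarrow{in}_{\mathcal{X}}(T)=\sum_{i=1}^k\overrightarrow{in}_{\mathcal{X}}(D_i)\quad\text{and}\quad \overrightarrow{hn}_{\mathcal{X}}(T)=\sum_{i=1}^k\overrightarrow{hn}_{\mathcal{X}}(D_i).$$ In particular, if $\ell\le k$ of the strong components are non-trivial (have more than one vertex), then $\overrightarrow{hn}_{P_3^*}(T)=\overrightarrow{hn}_{g}(T)=|\mathrm{Ext}(T)|+2\ell$.
   Context: A tournament is an orientation of a complete graph; its strong components are its maximal strongly connected subdigraphs (each $D_i$ is considered as the induced sub-tournament). For an oriented graph $D$: the geodetic interval function $I_g(u,v)$ is the set of vertices on some shortest directed $(u,v)$-path or some shortest directed $(v,u)$-path; the distance-two interval function $I_{P_3^*}(u,v)$ is $\{u,v\}$ together with all vertices $w$ with $(u,w),(w,v)\in A(D)$ and $(u,v)\notin A(D)$, or $(v,w),(w,u)\in A(D)$ and $(v,u)\notin A(D)$. For an interval function $I$ and $S\subseteq V(D)$, $I(S)=\bigcup_{u,v\in S}I(u,v)$; $C$ is convex if $I(C)=C$; the convex hull of $S$ is the smallest convex set containing $S$. An interval set is $S$ with $I(S)=V(D)$ and a hull set is $S$ with convex hull $V(D)$; $\overrightarrow{in}_{\mathcal{X}}(D)$ and $\overrightarrow{hn}_{\mathcal{X}}(D)$ are the minimum sizes of an interval set and of a hull set for $I_{\mathcal{X}}$. A vertex $v$ is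 transitive if whenever $(u,v),(v,w)\in A(D)$ we have $(u,w)\in A(D)$; $v$ is extreme if it is a source, a sink, or transitive; $\mathrm{Ext}(D)$ denotes the set of extreme vertices of $D$. *)

From Stdlib Require Import ClassicalEpsilon.
From mathcomp Require Import all_boot.

Set Implicit Arguments.
Unset Strict Implicit.
Unset Printing Implicit Defensive.

Definition pb (P : Prop) : bool :=
  if excluded_middle_informative P then true else false.

Section Digraphs.
Variable T : finType.
Variable a : rel T.   (* arc relation: a x y  <->  (x,y) is an arc *)

Definition tournament : Prop :=
  (forall x, ~~ a x x) /\ (forall x y, x != y -> a x y != a y x).

(* All digraph notions below are relative to the sub-digraph induced on V. *)

Definition walk (V : {set T}) (u : T) (p : seq T) : bool :=
  [&& u \in V, all (fun x => x \in V) p & path a u p].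

Definition on_shortest (V : {set T}) (u v w : T) : Prop :=
  exists p, [/\ walk V u p, last u p = v, w \in u :: p &
    forall q, walk V u q -> last u q = v -> size p <= size q].

Inductive ifun := Geo | P3s.

Definition Iv (X : ifun) (V : {set T}) (u v w : T) : Prop :=
  match X with
  | Geo => on_shortest V u v w \/ on_shortest V v u w
  | P3s => [/\ u \in V, v \in V & w \in V] /\
           (w = u \/ w = v \/
            (a u w /\ a w v /\ ~~ a u v) \/ (a v w /\ a w u /\ ~~ a v u))
  end.

Definition InI (X : ifun) (V S : {set T}) (w : T) : Prop :=
  exists u v, [/\ u \in S, v \in S & Iv X V u v w].

Definition interval_set (X : ifun) (V S : {set T}) : Prop :=
  S \subset V /\ forall w, InI X V S w <-> w \in V.

Definition convex (X : ifun) (V C : {set T}) : Prop :=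
  C \subset V /\ forall w, InI X V C w <-> w \in C.

Definition hull (X : ifun) (V S : {set T}) : {set T} :=
  [set w in V | pb (forall C : {set T}, S \subset C -> convex X V C -> w \in C)].

Definition hull_set (X : ifun) (V S : {set T}) : Prop :=
  S \subset V /\ hull X V S = V.

(* minimum sizes (V itself is always an interval set / hull set) *)
Definition in_num (X : ifun) (V : {set T}) : nat :=
  #|[arg min_(S < V | pb (interval_set X V S)) #|S|]|.

Definition hn_num (X : ifun) (V : {set T}) : nat :=
  #|[arg min_(S < V | pb (hull_set X V S)) #|S|]|.

Definition scomp (x : T) : {set T} := [set y | connect a x y && connect a y x].
Definition strong_components : {set {set T}} := [set scomp x | x in T].

Definition extreme (v : T) : bool :=
  [|| [forall u, ~~ a u v], [forall w, ~~ a v w] |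
      [forall u, forall w, a u v ==> a v w ==> a u w]].
Definition Ext : {set T} := [set v | extreme v].

End Digraphs.

(* In a tournament, the interval between two vertices of different strong
   components is just the pair itself: the arc joining them is their only
   shortest path and lies on no directed 3-cycle.  Hence interval sets, convex
   sets and hull sets of T are exactly the unions of such sets of the strong
   components, and both minimum sizes add up over the components.  A set with
   at most one vertex is convex, whereas every strong component is the
   P3*-hull, hence also the geodesic hull, of two of its vertices; so a
   component contributes 1 or 2 to the hull number according as it is trivial
   or not, and the trivial components are exactly the extreme vertices. *)

From mathcomp Require Import all_boot.
From Stdlib Require Import ClassicalEpsilon.

Set Implicit Arguments.
Unset Strict Implicit.
Unset Printing Implicit Defensive.

Lemma pbP (P : Prop) : reflect P (pb P).
Proof. by rewrite /pb; case: excluded_middle_informative => h; constructor. Qed.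

Section MinSize.
Variable T : finType.

Definition min_set (Q : {set T} -> Prop) (V : {set T}) : {set T} :=
  [arg min_(S < V | pb (Q S)) #|S|].

Definition min_size (Q : {set T} -> Prop) (V : {set T}) : nat := #|min_set Q V|.

Lemma min_setP Q V : Q V -> Q (min_set Q V).
Proof. by move=> QV; rewrite /min_set; case: arg_minnP => [|S /pbP]; first exact/pbP. Qed.

Lemma min_size_min Q V S : Q V -> Q S -> min_size Q V <= #|S|.
Proof.
move=> QV QS; rewrite /min_size /min_set.
by case: arg_minnP => [|S' _ minS']; [exact/pbP | exact/minS'/pbP].
Qed.

Variable P : {set {set T}}.
Hypothesis partP : partition P [set: T].

Lemma partition_eq D D' z : D \in P -> D' \in P -> z \in D -> z \in D' -> D = D'.
Proof.
case/and3P: partP => _ tiP _ PD PD' zD zD'.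
by rewrite -(def_pblock tiP PD zD) (def_pblock tiP PD' zD').
Qed.

Lemma card_partition_setI (S : {set T}) : #|S| = \sum_(D in P) #|S :&: D|.
Proof.
rewrite -sum1_card.
transitivity (\sum_(x in [set: T] | x \in S) 1).
  by apply: eq_bigl => x; rewrite in_setT.
rewrite (set_partition_big_cond _ partP) /=; apply: eq_bigr => D _.
by rewrite -sum1_card; apply: eq_bigl => x; rewrite inE andbC.
Qed.

Lemma bigcup_partition_setI (F : {set T} -> {set T}) D :
  {in P, forall D, F D \subset D} -> D \in P -> (\bigcup_(D' in P) F D') :&: D = F D.
Proof.
move=> sFP PD; apply/setP=> z; rewrite inE; apply/andP/idP => [[]|zF].
  case/bigcupP=> D' PD' zF zD.
  by rewrite (partition_eq PD PD' zD (subsetP (sFP D' PD') _ zF)).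
by split; [apply/bigcupP; exists D | exact: subsetP (sFP D PD) _ zF].
Qed.

Lemma min_size_partition (Q : {set T} -> {set T} -> Prop) :
  (forall V, Q V V) ->
  (forall D S, D \in P -> Q D S -> S \subset D) ->
  (forall S, Q [set: T] S <-> forall D, D \in P -> Q D (S :&: D)) ->
  min_size (Q [set: T]) [set: T] = \sum_(D in P) min_size (Q D) D.
Proof.
move=> QVV QsubD Qdec; apply/eqP; rewrite eqn_leq; apply/andP; split.
- pose U := \bigcup_(D in P) min_set (Q D) D.
  have UD D : D \in P -> U :&: D = min_set (Q D) D.
    move=> PD; apply: bigcup_partition_setI => // D' PD'.
    exact: QsubD _ _ PD' (min_setP (QVV D')).
  have QU : Q [set: T] U by apply/Qdec => D PD; rewrite UD //; exact: min_setP (QVV D).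
  apply: leq_trans (min_size_min (QVV _) QU) _.
  by rewrite (card_partition_setI U); apply/eq_leq/eq_bigr => D PD; rewrite UD.
- have QS := min_setP (QVV [set: T]).
  rewrite [leqRHS]card_partition_setI; apply: leq_sum => D PD.
  exact: min_size_min (QVV D) (proj1 (Qdec _) QS D PD).
Qed.

End MinSize.

Lemma connect_closed (T : finType) (e : rel T) (K : pred T) u v :
  (forall z z', K z -> e z z' -> K z') -> K u -> connect e u v -> K v.
Proof.
move=> Kcl Ku /connectP[p + ->]; elim: p u Ku => [|z p IHp] u Ku //=.
by case/andP=> euz; apply: IHp; exact: Kcl euz.
Qed.

Lemma card_setD_lt (T : finType) (D S S' : {set T}) z :
  S \subset S' -> z \in D :\: S -> z \in S' -> #|D :\: S'| < #|D :\: S|.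
Proof.
move=> sSS' zDS zS'; apply: proper_card; apply/properP; split; first exact: setDS.
by exists z; rewrite // in_setD zS' andFb.
Qed.

Section Tournament.
Variable T : finType.
Variable a : rel T.
Hypothesis tourT : tournament a.
Implicit Types (X : ifun) (V S C D P R : {set T}).

Local Notation comps := (strong_components a).

Lemma arc_irr x : ~~ a x x.
Proof. by case: tourT. Qed.

Lemma arcN x y : x != y -> ~~ a x y = a y x.
Proof. by case: tourT => _ /[apply]; case: (a x y); case: (a y x). Qed.

Lemma arc_asym x y : a x y -> ~~ a y x.
Proof.
have [<-|neq] := eqVneq x y; first by rewrite (negbTE (arc_irr x)).
by rewrite arcN // eq_sym.
Qed.

Lemma P3_cycle u v w : a u w -> a w v -> ~~ a u v -> a v u.
Proof.
move=> auw awv; rewrite arcN //; apply: contraTneq awv => <-.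
exact: arc_asym.
Qed.

(** Strong components *)

Lemma mem_scomp x y : (y \in scomp a x) = connect a x y && connect a y x.
Proof. by rewrite inE. Qed.

Lemma scomp_refl x : x \in scomp a x.
Proof. by rewrite mem_scomp connect0. Qed.

Lemma scomp_sym x y : y \in scomp a x -> x \in scomp a y.
Proof. by rewrite !mem_scomp andbC. Qed.

Lemma scomp_eq x y : y \in scomp a x -> scomp a y = scomp a x.
Proof.
rewrite mem_scomp => /andP[cxy cyx]; apply/setP=> z; rewrite !mem_scomp.
apply/andP/andP=> -[c1 c2]; split.
- exact: connect_trans cxy c1.
- exact: connect_trans c2 cyx.
- exact: connect_trans cyx c1.
- exact: connect_trans c2 cxy.
Qed.

Lemma scomp_in_comps x : scomp a x \in comps.
Proof. exact: imset_f. Qed.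

Lemma compsE D w : D \in comps -> w \in D -> D = scomp a w.
Proof. by case/imsetP=> x _ -> /scomp_eq ->. Qed.

Lemma comps_partition : partition comps [set: T].
Proof.
apply/and3P; split.
- apply/eqP/setP=> x; rewrite in_setT; apply/bigcupP.
  by exists (scomp a x); [exact: scomp_in_comps | exact: scomp_refl].
- apply/trivIsetP=> D D' PD PD'; apply: contraR => /pred0Pn[z /andP[zD zD']].
  by rewrite (compsE PD zD) (compsE PD' zD').
- by apply/imsetP=> -[x _ /setP/(_ x)]; rewrite scomp_refl inE.
Qed.

Lemma cycle3_scomp u v w :
  a u v -> a v w -> a w u -> (v \in scomp a u) && (w \in scomp a u).
Proof.
move=> /connect1 cuv /connect1 cvw /connect1 cwu.
by rewrite !mem_scomp cuv cwu (connect_trans cuv cvw) (connect_trans cvw cwu).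
Qed.

Lemma walk_setT u p : walk a [set: T] u p = path a u p.
Proof.
by rewrite /walk in_setT (@eq_all _ _ predT) ?all_predT // => z; rewrite in_setT.
Qed.

Lemma connect_last u p y : path a u p -> y \in u :: p -> connect a y (last u p).
Proof.
elim: p u y => [|z p IHp] u y /=; first by rewrite inE => _ /eqP ->.
case/andP=> auz pz; rewrite inE => /predU1P[->|yzp]; last exact: IHp z y pz yzp.
exact: connect_trans (connect1 auz) (IHp z z pz (mem_head _ _)).
Qed.

Lemma walk_scomp u p : path a u p -> connect a (last u p) u -> walk a (scomp a u) u p.
Proof.
move=> pth clu; rewrite /walk scomp_refl pth andbT; apply/allP=> y yp.
have yup : y \in u :: p by rewrite inE yp orbT.
by rewrite mem_scomp (path_connect pth yup) (connect_trans (connect_last pth yup) clu).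
Qed.

(** Intervals inside strong components *)

Lemma on_shortest_in V u v w : on_shortest a V u v w -> [/\ u \in V, v \in V & w \in V].
Proof.
case=> p [/and3P[uV /allP pV _] <- wp _].
have mem_up y : y \in u :: p -> y \in V by rewrite inE => /predU1P[->|/pV].
by split; apply: mem_up; rewrite ?mem_head ?mem_last.
Qed.

Lemma on_shortest_setT V u v w :
  (forall p, path a u p -> last u p = v -> walk a V u p) ->
  on_shortest a V u v w <-> on_shortest a [set: T] u v w.
Proof.
move=> Vwalks; split=> -[p [wp lp wp_in minp]]; exists p; split => //.
- by rewrite walk_setT; case/and3P: wp.
- by move=> q; rewrite walk_setT => qpath lq; exact: minp (Vwalks q qpath lq) lq.
- by apply: Vwalks; rewrite // -walk_setT.
- by move=> q /and3P[_ _ qpath] lq; apply: minp; rewrite ?walk_setT.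
Qed.

Lemma on_shortest_scomp u v w : v \in scomp a u ->
  on_shortest a (scomp a u) u v w <-> on_shortest a [set: T] u v w.
Proof.
move=> vu; apply: on_shortest_setT => p pth lp; apply: walk_scomp pth _.
by move: vu; rewrite lp mem_scomp => /andP[].
Qed.

Lemma on_shortest_cross u v w : v \notin scomp a u ->
  on_shortest a [set: T] u v w -> w = u \/ w = v.
Proof.
move=> vNu [p [wp lp wp_in minp]]; rewrite walk_setT in wp.
have cuv : connect a u v by rewrite -lp; exact: (path_connect wp (mem_last u p)).
have auv : a u v.
  have neq : v != u by apply: contraNneq vNu => ->; exact: scomp_refl.
  rewrite -arcN //; apply: contra vNu => cvu.
  by rewrite mem_scomp cuv connect1.
have : size p <= 1 by apply: (minp [:: v]); rewrite // walk_setT /= auv.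
case: p {wp minp} lp wp_in => [|z [|//]] /= ->; rewrite !inE.
  by move/eqP; auto.
by case/predU1P=> [|/eqP]; auto.
Qed.

Lemma Iv_in X V u v w : Iv a X V u v w -> [/\ u \in V, v \in V & w \in V].
Proof.
case: X => /=; last by case.
by case=> /on_shortest_in[]; split.
Qed.

Lemma Iv_refl X V u : u \in V -> Iv a X V u u u.
Proof.
move=> uV; case: X => /=; last by split; [split | left].
by left; exists [::]; split; rewrite ?mem_head // /walk uV.
Qed.

Lemma Iv_xx X V x w : Iv a X V x x w -> w = x.
Proof.
case: X => /=.
  suff os_xx y : on_shortest a V x x y -> y = x by case=> /os_xx ->.
  case=> -[|z p] [/and3P[xV _ _] _ yp minp]; first by move: yp; rewrite inE => /eqP.
  by have := minp [::]; rewrite /walk xV => /(_ isT erefl).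
case=> _ [->|[->|[[axw [awx _]]|[axw [awx _]]]]] //;
  by rewrite (negbTE (arc_asym axw)) in awx.
Qed.

Lemma Iv_scomp X u v w : v \in scomp a u ->
  Iv a X (scomp a u) u v w <-> Iv a X [set: T] u v w.
Proof.
move=> vu; case: X => /=.
  have Euv := on_shortest_scomp w vu.
  have Evu := on_shortest_scomp w (scomp_sym vu); rewrite (scomp_eq vu) in Evu.
  by split=> -[/Euv|/Evu]; auto.
split=> -[_ Pw]; split=> //.
split; [exact: scomp_refl | exact: vu |].
case: Pw => [->|[->|[[auw [awv nuv]]|[avw [awu nvu]]]]].
- exact: scomp_refl.
- exact: vu.
- by case/andP: (cycle3_scomp auw awv (P3_cycle auw awv nuv)).
- by case/andP: (cycle3_scomp (P3_cycle avw awu nvu) avw awu).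
Qed.

Lemma Iv_cross X u v w : v \notin scomp a u ->
  Iv a X [set: T] u v w -> w = u \/ w = v.
Proof.
move=> vNu; case: X => /=.
  have uNv : u \notin scomp a v by apply: contra vNu; exact: scomp_sym.
  by case=> [/(on_shortest_cross vNu)|/(on_shortest_cross uNv)[]]; auto.
case=> _ [|[|[[auw [awv nuv]]|[avw [awu nvu]]]]]; auto; case/negP: vNu.
- by case/andP: (cycle3_scomp auw awv (P3_cycle auw awv nuv)).
- by case/andP: (cycle3_scomp (P3_cycle avw awu nvu) avw awu).
Qed.

Lemma InI_in X V S w : InI a X V S w -> w \in V.
Proof. by case=> u [v [_ _ /Iv_in[]]]. Qed.

Lemma InI_subset X V S w : S \subset V -> w \in S -> InI a X V S w.
Proof. by move=> /subsetP sSV wS; exists w, w; split=> //; exact/Iv_refl/sSV. Qed.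

Lemma InI_setT X S w :
  InI a X [set: T] S w <-> InI a X (scomp a w) (S :&: scomp a w) w.
Proof.
split=> -[u [v [uS vS Iw]]].
  have [vu|vNu] := boolP (v \in scomp a u).
    have /Iv_in[_ _ wu] := iffRL (Iv_scomp X w vu) Iw.
    rewrite (scomp_eq wu); exists u, v; split; rewrite ?in_setI ?uS ?vS ?scomp_refl //.
    exact/(Iv_scomp X w vu).
  have wS : w \in S by case: (Iv_cross vNu Iw) => ->.
  exists w, w; split; rewrite ?in_setI ?wS ?scomp_refl //; exact/Iv_refl/scomp_refl.
move: uS vS; rewrite !in_setI => /andP[uS uw] /andP[vS vw].
rewrite -(scomp_eq uw) in Iw vw; exists u, v; split=> //.
exact/(Iv_scomp X w vw).
Qed.

Lemma convexE X V C :
  convex a X V C <-> C \subset V /\ forall w, InI a X V C w -> w \in C.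
Proof.
split=> -[sCV IC]; split=> // w; first by move/IC.
by split=> [/IC|]; last exact: InI_subset.
Qed.

Lemma convex_setT X C :
  convex a X [set: T] C <-> forall D, D \in comps -> convex a X D (C :&: D).
Proof.
split=> [/convexE[_ IC] D PD | convD].
  apply/convexE; split=> [|w Iw]; first exact: subsetIr.
  have wD := InI_in Iw; rewrite (compsE PD wD) in Iw *.
  by rewrite in_setI scomp_refl andbT; apply/IC/InI_setT.
apply/convexE; split=> [|w /InI_setT]; first exact: subsetT.
by case/convexE: (convD _ (scomp_in_comps w)) => _ IC /IC /setIP[].
Qed.

Lemma interval_setE X V S :
  interval_set a X V S <-> S \subset V /\ forall w, w \in V -> InI a X V S w.
Proof. by split=> -[sSV IS]; split=> // w; [move/IS | split=> [/InI_in|/IS]]. Qed.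

Lemma interval_set_full X V : interval_set a X V V.
Proof. by apply/interval_setE; split=> // w; exact: InI_subset. Qed.

Lemma interval_set_setT X S : interval_set a X [set: T] S <->
  forall D, D \in comps -> interval_set a X D (S :&: D).
Proof.
split=> [/interval_setE[_ IS] D PD | intD].
  apply/interval_setE; split=> [|w wD]; first exact: subsetIr.
  by rewrite (compsE PD wD); apply/InI_setT/IS; rewrite in_setT.
apply/interval_setE; split=> [|w _]; first exact: subsetT.
apply/InI_setT; case/interval_setE: (intD _ (scomp_in_comps w)) => _; apply.
exact: scomp_refl.
Qed.

(** Convex hulls *)

Lemma hullP X V S w : reflect (w \in V /\
  forall C, S \subset C -> convex a X V C -> w \in C) (w \in hull a X V S).
Proof. by rewrite inE; apply: (iffP andP) => -[wV /pbP]. Qed.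

Lemma hull_sub X V S : hull a X V S \subset V.
Proof. by apply/subsetP=> w /hullP[]. Qed.

Lemma hull_min X V S C : S \subset C -> convex a X V C -> hull a X V S \subset C.
Proof. by move=> sSC convC; apply/subsetP=> w /hullP[_]; apply. Qed.

Lemma subset_hull X V S : S \subset V -> S \subset hull a X V S.
Proof.
move=> /subsetP sSV; apply/subsetP=> s sS; apply/hullP; split; first exact: sSV.
by move=> C /subsetP sSC _; exact: sSC.
Qed.

Lemma convex_hull X V S : convex a X V (hull a X V S).
Proof.
apply/convexE; split=> [|w Iw]; first exact: hull_sub.
apply/hullP; split=> [|C sSC convC]; first exact: InI_in Iw.
have /convexE[_] := convC; apply; case: Iw => u [v [uH vH Iw]].
by exists u, v; split=> //; apply: (subsetP (hull_min sSC convC)).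
Qed.

Lemma hull_set_full X V : hull_set a X V V.
Proof. by split=> //; apply/eqP; rewrite eqEsubset hull_sub subset_hull. Qed.

Lemma hull_setT_comp X S D :
  D \in comps -> hull a X [set: T] S :&: D = hull a X D (S :&: D).
Proof.
move=> PD; apply/eqP; rewrite eqEsubset; apply/andP; split; last first.
  apply: hull_min; first exact/setSI/subset_hull/subsetT.
  by move/convex_setT: (convex_hull X [set: T] S); apply.
pose U := \bigcup_(D' in comps) hull a X D' (S :&: D').
have UD D' : D' \in comps -> U :&: D' = hull a X D' (S :&: D').
  apply: (bigcup_partition_setI (F := fun D' => hull a X D' (S :&: D')) comps_partition).
  by move=> D'' _; exact: hull_sub.
have convU : convex a X [set: T] U.
  by apply/convex_setT => D' PD'; rewrite UD //; exact: convex_hull.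
have sSU : S \subset U.
  apply/subsetP=> s sS; suff: s \in U :&: scomp a s by case/setIP.
  rewrite UD ?scomp_in_comps //; apply: (subsetP (subset_hull _ (subsetIr _ _))).
  by rewrite in_setI sS scomp_refl.
by rewrite -UD // setSI // hull_min.
Qed.

Lemma hull_set_setT X S : hull_set a X [set: T] S <->
  forall D, D \in comps -> hull_set a X D (S :&: D).
Proof.
split=> [[_ hullT] D PD | hullD].
  by split; [exact: subsetIr | rewrite -hull_setT_comp // hullT setTI].
split; first exact: subsetT.
apply/setP=> w; rewrite in_setT; have [_ hullw] := hullD _ (scomp_in_comps w).
have := scomp_refl w; rewrite -{1}hullw -hull_setT_comp ?scomp_in_comps //.
by case/setIP.
Qed.

Lemma on_shortest_P3 V u v w : u \in V -> v \in V -> w \in V ->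
  a u w -> a w v -> ~~ a u v -> on_shortest a V u v w.
Proof.
move=> uV vV wV auw awv nuv; exists [:: w; v]; split=> //.
- by rewrite /walk /= uV wV vV auw awv.
- by rewrite !inE eqxx orbT.
case=> [|z [|z' q]] //= /and3P[_ _ pq] lq.
  by move: awv; rewrite -lq (negbTE (arc_asym auw)).
by move: pq; rewrite lq /= (negbTE nuv).
Qed.

Lemma InI_P3s_Geo V S w : InI a P3s V S w -> InI a Geo V S w.
Proof.
case=> u [v [uS vS [[uV vV wV] Pw]]].
case: Pw => [->|[->|[[auw [awv nuv]]|[avw [awu nvu]]]]].
- by exists u, u; split=> //; exact: Iv_refl.
- by exists v, v; split=> //; exact: Iv_refl.
- by exists u, v; split=> //; left; exact: on_shortest_P3.
- by exists u, v; split=> //; right; exact: on_shortest_P3.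
Qed.

Lemma convex_Geo_P3s V C : convex a Geo V C -> convex a P3s V C.
Proof. by case/convexE=> sCV IC; apply/convexE; split=> // w /InI_P3s_Geo /IC. Qed.

Lemma hull_P3s_Geo V S : S \subset V -> hull a P3s V S \subset hull a Geo V S.
Proof.
by move=> sSV; apply: hull_min (subset_hull _ sSV) (convex_Geo_P3s (convex_hull _ _ _)).
Qed.

Lemma convex_card_le1 X V S : S \subset V -> #|S| <= 1 -> convex a X V S.
Proof.
move=> sSV /card_le1_eqP S1; apply/convexE; split=> // w [u [v [uS vS Iw]]].
by rewrite -(S1 u v uS vS) in Iw; rewrite (Iv_xx Iw).
Qed.

Lemma hull_set_card X V S : hull_set a X V S -> minn #|V| 2 <= #|S|.
Proof.
case=> sSV hullS; have [S1|S2] := leqP #|S| 1; last by rewrite geq_min S2 orbT.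
have sVS : V \subset S.
  by rewrite -{1}hullS; exact: hull_min (subxx S) (convex_card_le1 X sSV S1).
by rewrite geq_min (subset_leq_card sVS).
Qed.

(** Hull number of a strong component *)

(* Cut characterisation of strong connectivity of the subdigraph induced on S. *)
Definition strong_set S : Prop :=
  forall P, P :&: S != set0 -> ~~ (S \subset P) ->
  exists q p, [/\ q \in S :\: P, p \in S :&: P & a q p].

Lemma strong_set1 x : strong_set [set x].
Proof.
move=> P /set0Pn[y /setIP[yP /set1P yx]] /negP[].
by rewrite sub1set -yx.
Qed.

Lemma strong_scomp x : strong_set (scomp a x).
Proof.
move=> P /set0Pn[p0 /setIP[p0P p0D]] /subsetPn[q0 q0D q0P].
have [/exists_inP[q qD /exists_inP[p pD aqp]]|noarc] := boolP
    [exists q in scomp a x :\: P, exists p in scomp a x :&: P, a q p].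
  by exists q, p.
have cD y z : y \in scomp a x -> z \in scomp a x -> connect a y z.
  by rewrite !mem_scomp => /andP[_ cyx] /andP[cxz _]; exact: connect_trans cyx cxz.
pose K := [pred y | connect a q0 y && (y \notin scomp a x :&: P)].
have Kcl y z : K y -> a y z -> K z.
  case/andP=> cq0y yNDP ayz; rewrite /= (connect_trans cq0y (connect1 ayz)) /=.
  apply: contra noarc => zDP; have [zD _] := setIP zDP.
  have yD : y \in scomp a x.
    rewrite mem_scomp (connect_trans (cD _ _ (scomp_refl x) q0D) cq0y) /=.
    exact: connect_trans (connect1 ayz) (cD _ _ zD (scomp_refl x)).
  apply/exists_inP; exists y; last by apply/exists_inP; exists z.
  by rewrite in_setD yD andbT; apply: contra yNDP => yP; rewrite in_setI yD.
have Kq0 : K q0 by rewrite /= connect0 in_setI (negbTE q0P) andbF.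
have /andP[_] := connect_closed Kcl Kq0 (cD _ _ q0D p0D).
by rewrite in_setI p0D p0P.
Qed.

Lemma strong_set_ext S R : strong_set S -> S \subset R ->
  (forall P, P :&: R != set0 -> ~~ (R \subset P) -> [disjoint P & S] \/ S \subset P ->
     exists q p, [/\ q \in R :\: P, p \in R :&: P & a q p]) ->
  strong_set R.
Proof.
move=> strS sSR cutR P PR RP.
have [dPS|PS] := boolP [disjoint P & S]; first exact: cutR (or_introl dPS).
have [SP|SNP] := boolP (S \subset P); first exact: cutR (or_intror SP).
have [|q [p [qS pS aqp]]] := strS P _ SNP; first by rewrite setI_eq0.
exists q, p; split=> //; first exact: subsetP (setSD P sSR) _ qS.
exact: subsetP (setSI P sSR) _ pS.
Qed.

Lemma strong_setU1 S z p q : strong_set S -> p \in S -> q \in S ->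
  a p z -> a z q -> strong_set (z |: S).
Proof.
move=> strS pS qS apz azq; apply: strong_set_ext strS (subsetUr _ _) _.
move=> P PR RP [dPS|SP].
  have zP : z \in P.
    case/set0Pn: PR => y /setIP[yP /setU1P[<-//|yS]].
    by rewrite (disjointFl dPS yS) in yP.
  exists p, z; split=> //; last by rewrite in_setI setU11.
  by rewrite in_setD (disjointFl dPS pS) setU1r.
have zNP : z \notin P by apply: contra RP => zP; rewrite subUset sub1set zP.
exists z, q; split=> //; first by rewrite in_setD zNP setU11.
by rewrite in_setI setU1r // (subsetP SP).
Qed.

Lemma strong_setU2 S u v s0 : strong_set S -> s0 \in S ->
  {in S, forall s, a u s} -> {in S, forall s, a s v} -> a v u ->
  strong_set (u |: (v |: S)).
Proof.
move=> strS s0S auS aSv avu.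
have sSR : S \subset u |: (v |: S) by apply/subsetP=> s sS; rewrite !setU1r.
have uR : u \in u |: (v |: S) by rewrite setU11.
have vR : v \in u |: (v |: S) by rewrite setU1r ?setU11.
have s0R := subsetP sSR _ s0S.
apply: strong_set_ext strS sSR _ => P PR RP [dPS|SP].
  have [vP|vNP] := boolP (v \in P).
    by exists s0, v; rewrite in_setD in_setI (disjointFl dPS s0S) s0R vR vP aSv.
  have uP : u \in P.
    case/set0Pn: PR => y /setIP[yP /setU1P[<-//|/setU1P[yv|yS]]].
      by rewrite -yv yP in vNP.
    by rewrite (disjointFl dPS yS) in yP.
  by exists v, u; rewrite in_setD in_setI vNP vR uR uP avu.
have s0P := subsetP SP _ s0S.
have [uP|uNP] := boolP (u \in P).
  have vNP : v \notin P.
    by apply: contra RP => vP; rewrite !subUset !sub1set uP vP SP.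
  by exists v, u; rewrite in_setD in_setI vNP vR uR uP avu.
by exists u, s0; rewrite in_setD in_setI uNP uR s0R s0P auS.
Qed.

Lemma strong_set_cycle3 S z p q : strong_set S -> z \notin S -> p \in S -> q \in S ->
  a p z -> a z q -> exists p' q', [/\ p' \in S, q' \in S, a p' z, a z q' & a q' p'].
Proof.
move=> strS zNS pS qS apz azq.
have [||q' [p' []]] := strS [set s | a s z].
- by apply/set0Pn; exists p; rewrite in_setI inE apz.
- by apply/subsetPn; exists q; rewrite // inE (negbTE (arc_asym azq)).
rewrite in_setD in_setI !inE => /andP[q'z q'S] /andP[p'S p'z] aq'p'.
exists p', q'; split=> //; rewrite -arcN //.
by apply: contraNneq zNS => <-.
Qed.

Lemma scomp_dominating_pair x S y s0 : S \subset scomp a x -> s0 \in S ->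
  y \in scomp a x :\: S ->
  ~~ [exists z in scomp a x :\: S, exists p in S, exists q in S, a p z && a z q] ->
  exists u v, [/\ u \in scomp a x :\: S, v \in scomp a x :\: S,
    {in S, forall s, a u s}, {in S, forall s, a s v} & a v u].
Proof.
move=> sSD s0S yDS noP3.
have noP3' z p q : z \in scomp a x :\: S -> p \in S -> q \in S -> a p z -> ~~ a z q.
  move=> zDS pS qS apz; apply: contra noP3 => azq; apply/exists_inP; exists z => //.
  by apply/exists_inP; exists p => //; apply/exists_inP; exists q; rewrite ?apz.
have s0D := subsetP sSD _ s0S.
pose A := [set z in scomp a x :\: S | [forall s in S, a z s]].
have [||q [p [qDS pDS aqp]]] := @strong_scomp x S.
- by apply/set0Pn; exists s0; rewrite in_setI s0S s0D.
- by apply/subsetPn; exists y; case/setDP: yDS.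
have qA : q \in A.
  have [_ qNS] := setDP qDS; have [_ pS] := setIP pDS.
  rewrite inE qDS; apply/forall_inP=> s sS; apply: contraT => nqs.
  have asq : a s q by rewrite -arcN //; apply: contraNneq qNS => ->.
  by have := noP3' q s p qDS sS pS asq; rewrite aqp.
have [||b [u [bDA uDA abu]]] := @strong_scomp x A.
- by apply/set0Pn; exists q; rewrite in_setI qA; case/setDP: qDS.
- by apply/subsetPn; exists s0; rewrite // inE in_setD s0S.
have [_ uA] := setIP uDA; move: uA; rewrite inE => /andP[uDS /forall_inP auS].
have [bD bNA] := setDP bDA.
have bNS : b \notin S by apply: contraTN abu => /auS/arc_asym.
have bDS : b \in scomp a x :\: S by rewrite in_setD bNS.
move: bNA; rewrite inE bDS => /forall_inPn[s1 s1S nbs1].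
have as1b : a s1 b by rewrite -arcN //; apply: contraNneq bNS => ->.
exists u, b; split=> // s sS; apply: contraT => nsb.
have absb : a b s by rewrite -arcN //; apply: contraNneq bNS => <-.
by have := noP3' b s1 s bDS s1S sS as1b; rewrite absb.
Qed.

Lemma hull_P3s_mem V S u v w : u \in hull a P3s V S -> v \in hull a P3s V S ->
  w \in V -> a u w -> a w v -> ~~ a u v -> w \in hull a P3s V S.
Proof.
move=> uH vH wV auw awv nuv; have /convexE[_] := convex_hull P3s V S; apply.
have /subsetP sHV := hull_sub P3s V S.
by exists u, v; split=> //; split; [split=> //; exact: sHV | right; right; left].
Qed.

Definition hull_seed V S u v : Prop := [/\ [set u; v] \subset V, S \subset V,
  S != set0, strong_set S & S \subset hull a P3s V [set u; v]].

Lemma hull_seed_cycle3 V S u v z p q : hull_seed V S u v -> z \in V -> z \notin S ->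
  p \in S -> q \in S -> a p z -> a z q -> hull_seed V (z |: S) u v.
Proof.
case=> uvV sSV _ strS sSH zV zNS pS qS apz azq.
have [p' [q' [p'S q'S ap'z azq' aq'p']]] := strong_set_cycle3 strS zNS pS qS apz azq.
split=> //.
- by rewrite subUset sub1set zV.
- by apply/set0Pn; exists z; rewrite setU11.
- exact: strong_setU1 strS p'S q'S ap'z azq'.
rewrite subUset sub1set sSH andbT.
exact: hull_P3s_mem (subsetP sSH _ p'S) (subsetP sSH _ q'S) zV ap'z azq' (arc_asym aq'p').
Qed.

Lemma hull_seed_switch V S s0 u v : S \subset V -> s0 \in S -> strong_set S ->
  u \in V -> v \in V -> {in S, forall s, a u s} -> {in S, forall s, a s v} -> a v u ->
  hull_seed V (u |: (v |: S)) u v.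
Proof.
move=> sSV s0S strS uV vV uS Sv avu.
have uvV : [set u; v] \subset V by rewrite subUset !sub1set uV vV.
have /subsetP uvH := subset_hull P3s uvV.
split=> //.
- by rewrite !subUset !sub1set uV vV.
- by apply/set0Pn; exists u; rewrite setU11.
- exact: strong_setU2 strS s0S uS Sv avu.
rewrite !subUset !sub1set !uvH ?set21 ?set22 //=; apply/subsetP=> s sS.
apply: hull_P3s_mem (uvH _ (set21 u v)) (uvH _ (set22 u v)) _ (uS s sS) (Sv s sS) _.
  exact: subsetP sSV _ sS.
exact: arc_asym.
Qed.

(* A vertex with an in- and an out-neighbour in S closes a 3-cycle with S;
   otherwise every vertex outside S dominates or is dominated by S, and an arc
   from a dominated to a dominating vertex gives a pair whose hull swallows S. *)
Lemma scomp_hull_pair x : exists u v,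
  [set u; v] \subset scomp a x /\ hull a P3s (scomp a x) [set u; v] = scomp a x.
Proof.
suff grow S u v : hull_seed (scomp a x) S u v -> exists u' v',
    [set u'; v'] \subset scomp a x /\ hull a P3s (scomp a x) [set u'; v'] = scomp a x.
  apply: (grow [set x] x x); rewrite /hull_seed setUid sub1set scomp_refl.
  split=> //; last by rewrite subset_hull // sub1set scomp_refl.
  - by apply/set0Pn; exists x; rewrite set11.
  - exact: strong_set1.
have [n] := ubnP #|scomp a x :\: S|; elim: n S u v => // n IHn S u v.
rewrite ltnS => leSn seed; have [uvD sSD /set0Pn[s0 s0S] strS sSH] := seed.
have [sDS|/subsetPn[y yD yNS]] := boolP (scomp a x \subset S).
  exists u, v; split=> //; apply/eqP.
  by rewrite eqEsubset hull_sub (subset_trans sDS sSH).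
have [/exists_inP[z zDS /exists_inP[p pS /exists_inP[q qS /andP[apz azq]]]]|noP3] :=
  boolP [exists z in scomp a x :\: S, exists p in S, exists q in S, a p z && a z q].
  have [zD zNS] := setDP zDS.
  apply: (IHn (z |: S) u v); last exact: hull_seed_cycle3 seed zD zNS pS qS apz azq.
  exact: leq_trans (card_setD_lt (subsetUr _ _) zDS (setU11 _ _)) leSn.
have yDS : y \in scomp a x :\: S by rewrite in_setD yNS.
have [u' [v' [u'DS v'DS u'S Sv' av'u']]] := scomp_dominating_pair sSD s0S yDS noP3.
have /setDP[u'D _] := u'DS; have /setDP[v'D _] := v'DS.
apply: (IHn (u' |: (v' |: S)) u' v');
  last exact: hull_seed_switch sSD s0S strS u'D v'D u'S Sv' av'u'.
apply: leq_trans (card_setD_lt _ u'DS (setU11 _ _)) leSn.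
by apply/subsetP=> s sS; rewrite !setU1r.
Qed.

Lemma hn_num_scomp X x : hn_num a X (scomp a x) = minn #|scomp a x| 2.
Proof.
apply/eqP; rewrite eqn_leq; apply/andP; split; last first.
  exact: hull_set_card (min_setP (hull_set_full X _)).
have [u [v [uvD huv]]] := scomp_hull_pair x.
have hull_uv : hull_set a X (scomp a x) [set u; v].
  split=> //; case: X => //; apply/eqP; rewrite eqEsubset hull_sub -{1}huv.
  exact: hull_P3s_Geo.
apply: leq_trans (min_size_min (hull_set_full X _) hull_uv) _.
by rewrite leq_min subset_leq_card // cards2; case: (u != v).
Qed.

(** Extreme vertices *)

Lemma extreme_scomp x : extreme a x = (#|scomp a x| <= 1).
Proof.
apply/idP/idP=> [ext | /card_le1_eqP scomp1].
  suff scomp_x y : y \in scomp a x -> y = x.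
    by apply/card_le1_eqP=> y z /scomp_x -> /scomp_x ->.
  rewrite mem_scomp => /andP[cxy cyx]; apply/eqP; apply: contraT => yNx.
  case/or3P: ext => [/forallP src | /forallP snk | /forallP trans].
  - have Kcl z z' : z != x -> a z z' -> z' != x.
      by move=> _ azz'; apply: contraTneq (src z) => <-; rewrite negbK.
    by have := connect_closed Kcl yNx cyx; rewrite eqxx.
  - have Kcl z z' : z == x -> a z z' -> z' == x.
      by move=> /eqP-> axz'; move: (snk z'); rewrite axz'.
    by have := connect_closed Kcl (eqxx x) cxy; rewrite (negbTE yNx).
  have Kcl z z' : a x z -> a z z' -> a x z'.
    move=> axz azz'; rewrite -[a x z']negbK arcN; last first.
      by apply: contraTneq azz' => <-; exact: arc_asym.
    apply/negP=> az'x; have /forallP/(_ z) := trans z'.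
    by rewrite az'x axz /= (negbTE (arc_asym azz')).
  case/connectP: cxy => -[/= _ yx|z p /= /andP[axz pzp] lp].
    by rewrite yx eqxx in yNx.
  have czx : connect a z x by apply: connect_trans cyx; apply/connectP; exists p.
  by have := connect_closed Kcl axz czx; rewrite (negbTE (arc_irr x)).
apply/or3P; apply: Or33; apply/forallP=> u; apply/forallP=> w.
apply/implyP=> aux; apply/implyP=> axw; rewrite -[a u w]negbK arcN; last first.
  by apply: contraTneq aux => ->; exact: arc_asym.
apply/negP=> awu; suff wx : w = x by rewrite wx (negbTE (arc_irr x)) in axw.
apply: (scomp1 x w (scomp_refl x)).
by rewrite mem_scomp (connect1 axw) (connect_trans (connect1 awu) (connect1 aux)).
Qed.

Lemma card_Ext : #|Ext a| = \sum_(D in comps) (#|D| <= 1).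
Proof.
rewrite (card_partition_setI comps_partition); apply: eq_bigr => _ /imsetP[x _ ->].
have Ext_x z : z \in scomp a x -> (z \in Ext a) = (#|scomp a x| <= 1).
  by move=> zx; rewrite inE extreme_scomp (scomp_eq zx).
case: leqP => [x1|x2].
  rewrite (setIidPr _); last by apply/subsetP=> z zx; rewrite Ext_x.
  by apply/eqP; rewrite eqn_leq x1 card_gt0; apply/set0Pn; exists x; exact: scomp_refl.
apply/eqP; rewrite cards_eq0; apply/eqP/setP=> z; rewrite in_setI in_set0.
by apply/andP=> -[zE zx]; move: zE; rewrite Ext_x // leqNgt x2.
Qed.

Lemma in_num_comps X : in_num a X [set: T] = \sum_(D in comps) in_num a X D.
Proof.
apply: (min_size_partition comps_partition) => [V|D S _ []//|S].
  exact: interval_set_full.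
exact: interval_set_setT.
Qed.

Lemma hn_num_comps X : hn_num a X [set: T] = \sum_(D in comps) hn_num a X D.
Proof.
apply: (min_size_partition comps_partition) => [V|D S _ []//|S].
  exact: hull_set_full.
exact: hull_set_setT.
Qed.

Lemma hn_num_Ext X :
  hn_num a X [set: T] = #|Ext a| + 2 * #|[set D in comps | 1 < #|D|]|.
Proof.
have -> : #|[set D in comps | 1 < #|D|]| = \sum_(D in comps) (1 < #|D|).
  rewrite -sum1_card (eq_bigl (fun D => (D \in comps) && (1 < #|D|))) => [|D].
    by rewrite big_mkcondr; apply: eq_bigr => D _; case: ifP.
  by rewrite inE.
rewrite hn_num_comps card_Ext big_distrr -big_split /=.
apply: eq_bigr => _ /imsetP[x _ ->]; rewrite hn_num_scomp.
have : 0 < #|scomp a x| by apply/card_gt0P; exists x; exact: scomp_refl.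
by case: #|scomp a x| => [|[|n]].
Qed.

End Tournament.

Theorem proposition6 (T : finType) (a : rel T) :
  tournament a -> 0 < #|T| ->
  (forall X : ifun,
     in_num a X [set: T] = \sum_(D in strong_components a) in_num a X D /\
     hn_num a X [set: T] = \sum_(D in strong_components a) hn_num a X D) /\
  (forall l : nat,
     l = #|[set D in strong_components a | 1 < #|D|]| ->
     hn_num a P3s [set: T] = #|Ext a| + 2 * l /\
     hn_num a Geo [set: T] = #|Ext a| + 2 * l).
Proof.
move=> tourT _.
split=> [X|l ->]; first by rewrite in_num_comps // hn_num_comps.
by rewrite !hn_num_Ext.
Qed.
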